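(* Let $n\equiv 3\pmod 4$ with $n>3$. Let $1\le r\le m$, let $M_r\in\mathfrak{C}_r$, and suppose $\det\tilde M_r>0$. Then the set of elements $E_m\in\mathfrak{E}_m$ with $\det\tilde E_m>0$ is non-empty.
   Context: Fix an integer $n\equiv 3\pmod 4$, $n>3$. For $m\ge1$, $\mathfrak{C}_m$ is the set of symmetric positive definite $m\times m$ integer matrices $C=(c_{ij})$ with $c_{ii}=n$ and $c_{ij}\equiv n\pmod 4$ for all $i,j$. Given a fixed $M_r\in\mathfrak{C}_r$, for $m\ge r$, $\mathfrak{E}_m$ is the set of $E_m\in\mathfrak{C}_m$ whose leading $r\times r$ submatrix is $M_r$. For a square matrix $C$ of order $m$, $\tilde C$ denotes the matrix obtained from $C$ by replacing its $(m,m)$ entry by $3$. *)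

From HB Require Import structures.
From mathcomp Require Import all_boot all_order all_algebra.
From mathcomp Require Import Rstruct.
Set Implicit Arguments. Unset Strict Implicit. Unset Printing Implicit Defensive.
Import Order.TTheory GRing.Theory Num.Theory.
Local Open Scope ring_scope.

Definition symmetric_int (m : nat) (C : 'M[int]_m) : Prop := C^T = C.

Definition posdef_int (m : nat) (C : 'M[int]_m) : Prop :=
  forall x : 'cV[Rdefinitions.R]_m, x != 0 ->
    0 < (x^T *m map_mx (fun z : int => z%:~R) C *m x) 0 0.

Definition in_frakC (n m : nat) (C : 'M[int]_m) : Prop :=
  [/\ symmetric_int C, posdef_int C,
      (forall i : 'I_m, C i i = n%:Z) &
      (forall i j : 'I_m, (C i j = n%:Z %[mod 4])%Z)].

Definition in_frakE (n r m : nat) (Hrm : (r <= m)%N) (M : 'M[int]_r)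
    (E : 'M[int]_m) : Prop :=
  in_frakC n E /\
  (forall i j : 'I_r, E (widen_ord Hrm i) (widen_ord Hrm j) = M i j).

Definition tilde (m : nat) (C : 'M[int]_m) : 'M[int]_m :=
  \matrix_(i, j) if ((i : nat) == m.-1) && ((j : nat) == m.-1) then 3 else C i j.

(* Extend M one index at a time, the new row and column repeating the last row
   and column of M except for n on the diagonal and 3 in the trailing block;
   since 3 = n (mod 4) the congruence conditions are preserved.  In the tilde
   of such an extension the last two rows differ by (n - 3) e_k, so each step
   multiplies det (tilde E) by n - 3 > 0, while
   det E = det (tilde E) + (n - 3) det (leading block of E) > 0.
   Positive definiteness then propagates by the bordered-matrix criterion
   (leading block positive definite and det > 0), proved with the Schur
   complement of the leading block. *)

From HB Require Import structures.
From mathcomp Require Import all_boot all_order all_algebra.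
From mathcomp Require Import Rstruct.
From mathcomp Require Import ring zify.
Set Implicit Arguments. Unset Strict Implicit. Unset Printing Implicit Defensive.
Import Order.TTheory GRing.Theory Num.Theory.
Local Open Scope ring_scope.

Definition leadmx {T : Type} p (B : 'M[T]_p.+1) : 'M[T]_p :=
  row' ord_max (col' ord_max B).

Lemma widen_ord_max p (i : 'I_p) : widen_ord (leqnSn p) i = lift ord_max i.
Proof. by apply: val_inj; rewrite /= /bump leqNgt ltn_ord. Qed.

Lemma cofactor_diag (R : comPzRingType) p (A : 'M[R]_p) i :
  cofactor A i i = \det (row' i (col' i A)).
Proof. by rewrite /cofactor addnn -signr_odd odd_double mul1r. Qed.

Section PositiveDefinite.
Variable R : realFieldType.

Definition qform p (B : 'M[R]_p) (x : 'cV[R]_p) : R := (x^T *m B *m x) 0 0.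

Definition posdefmx p (B : 'M[R]_p) :=
  forall x : 'cV[R]_p, x != 0 -> 0 < qform B x.

Definition lastcol p (B : 'M[R]_p.+1) : 'cV[R]_p :=
  \col_i B (lift ord_max i) ord_max.

Definition col_rcons p (y : 'cV[R]_p) (t : R) : 'cV[R]_p.+1 :=
  \col_i (if unlift ord_max i is Some j then y j 0 else t).

Lemma col_rcons_lift p (y : 'cV[R]_p) t i : col_rcons y t (lift ord_max i) 0 = y i 0.
Proof. by rewrite mxE liftK. Qed.

Lemma col_rcons_max p (y : 'cV[R]_p) t : col_rcons y t ord_max 0 = t.
Proof. by rewrite mxE unlift_none. Qed.

Lemma col_rconsP p (x : 'cV[R]_p.+1) : exists y t, x = col_rcons y t.
Proof.
exists (\col_j x (lift ord_max j) 0), (x ord_max 0).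
by apply/colP => i; case: (unliftP ord_max i) => [j ->|->];
  rewrite ?col_rcons_lift ?col_rcons_max ?mxE.
Qed.

Lemma col_rcons_eq0 p (y : 'cV[R]_p) t : (col_rcons y t == 0) = (y == 0) && (t == 0).
Proof.
apply/eqP/andP => [/colP x0|[/eqP-> /eqP->]].
  split; last by have := x0 ord_max; rewrite col_rcons_max mxE => ->.
  by apply/eqP/colP => i; have := x0 (lift ord_max i); rewrite col_rcons_lift !mxE.
by apply/colP => i; case: (unliftP ord_max i) => [j ->|->];
  rewrite ?col_rcons_lift ?col_rcons_max !mxE.
Qed.

Lemma tr_col_rcons_mul p (y y' : 'cV[R]_p) t t' :
  ((col_rcons y t)^T *m col_rcons y' t') 0 0 = (y^T *m y') 0 0 + t * t'.
Proof.
rewrite mxE big_ord_recr /= [_^T 0 ord_max]mxE !col_rcons_max mxE; congr (_ + _).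
by apply: eq_bigr => i _; rewrite widen_ord_max [_^T _ _]mxE !col_rcons_lift mxE.
Qed.

Lemma mul_col_rcons p (B : 'M[R]_p.+1) y t : B^T = B ->
  B *m col_rcons y t = col_rcons (leadmx B *m y + t *: lastcol B)
                                 (((lastcol B)^T *m y) 0 0 + t * B ord_max ord_max).
Proof.
move=> symB; apply/colP => i; rewrite mxE big_ord_recr /= col_rcons_max.
case: (unliftP ord_max i) => [i' ->|->];
  rewrite ?col_rcons_lift ?col_rcons_max !mxE [t * _]mulrC; congr (_ + _);
  apply: eq_bigr => k _; rewrite widen_ord_max col_rcons_lift !mxE //.
by rewrite -[in LHS]symB mxE.
Qed.

Lemma qformD p (A : 'M[R]_p) x w s : A^T = A ->
  qform A (x + s *: w) = qform A x + 2 * s * (x^T *m A *m w) 0 0 + s ^+ 2 * qform A w.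
Proof.
move=> symA; rewrite /qform.
have -> : (x + s *: w)^T = x^T + s *: w^T by rewrite linearD linearZ.
rewrite !mulmxDl !mulmxDr -!scalemxAl -!scalemxAr.
rewrite ![(_ + _ : 'M[R]_1) 0 0]mxE ![(_ *: _ : 'M[R]_1) 0 0]mxE.
have -> : w^T *m A *m x = (x^T *m A *m w)^T by rewrite !trmx_mul trmxK symA mulmxA.
rewrite [_^T 0 0]mxE; ring.
Qed.

Lemma qform_col_rcons0 p (B : 'M[R]_p.+1) y : B^T = B ->
  qform B (col_rcons y 0) = qform (leadmx B) y.
Proof.
move=> symB; rewrite /qform -mulmxA mul_col_rcons // scale0r addr0 mul0r addr0.
by rewrite tr_col_rcons_mul mul0r addr0 mulmxA.
Qed.

Lemma leadmx_sym p (B : 'M[R]_p.+1) : B^T = B -> (leadmx B)^T = leadmx B.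
Proof. by move=> symB; apply/matrixP => i j; rewrite !mxE -[in RHS]symB mxE. Qed.

Lemma posdef_leadmx p (B : 'M[R]_p.+1) : B^T = B -> posdefmx B -> posdefmx (leadmx B).
Proof.
move=> symB posB y y0; rewrite -qform_col_rcons0 //.
by apply: posB; rewrite col_rcons_eq0 negb_and y0.
Qed.

Lemma posdef_qform_ge0 p (B : 'M[R]_p) x : posdefmx B -> 0 <= qform B x.
Proof.
move=> posB; have [->|x0] := eqVneq x 0; last exact/ltW/posB.
by rewrite /qform mulmx0 mxE.
Qed.

Section Schur.
Variables (p : nat) (B : 'M[R]_p.+1).
Hypotheses (symB : B^T = B) (unit_lead : leadmx B \in unitmx).

Let z := invmx (leadmx B) *m lastcol B.
Definition schur_vec := col_rcons (- z) 1.
Definition schur_compl := B ord_max ord_max - ((lastcol B)^T *m z) 0 0.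

Lemma mul_schur_vec : B *m schur_vec = col_rcons 0 schur_compl.
Proof.
rewrite mul_col_rcons // mulmxN mulKVmx // scale1r addNr mul1r.
by rewrite mulmxN [(- _ : 'M_1) 0 0]mxE addrC.
Qed.

Lemma qform_schur_vec : qform B schur_vec = schur_compl.
Proof.
by rewrite /qform -mulmxA mul_schur_vec tr_col_rcons_mul mulmx0 mxE mul1r add0r.
Qed.

Lemma qform_col_rcons_schur y t :
  qform B (col_rcons y t) = qform (leadmx B) (y + t *: z) + schur_compl * t ^+ 2.
Proof.
have -> : col_rcons y t = col_rcons (y + t *: z) 0 + t *: schur_vec.
  apply/colP => i; rewrite !mxE.
  by case: (unlift ord_max i) => [j|]; rewrite ?mxE; ring.
rewrite qformD // qform_col_rcons0 // qform_schur_vec -mulmxA mul_schur_vec.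
by rewrite tr_col_rcons_mul mulmx0 mxE mul0r add0r mulr0 addr0 mulrC.
Qed.

Lemma det_schur : \det B = \det (leadmx B) * schur_compl.
Proof.
pose L := \matrix_(i, j) if j == ord_max then schur_vec i 0 else (i == j)%:R.
have detL : \det L = 1.
  rewrite -det_tr det_trig.
    apply: big1 => i _; rewrite [L^T _ _]mxE /L mxE eqxx.
    by case: eqP => [->|_]; rewrite ?col_rcons_max.
  apply/is_trig_mxP => i j ij; rewrite !mxE -!val_eqE /= (gtn_eqF ij).
  by rewrite (ltn_eqF (leq_trans ij (leq_ord j))).
have BL_max i : (B *m L) i ord_max = col_rcons 0 schur_compl i 0.
  rewrite -mul_schur_vec !mxE.
  by apply: eq_bigr => k _; rewrite /L mxE eqxx.
have BL_lift i j : (B *m L) i (lift ord_max j) = B i (lift ord_max j).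
  rewrite -[in RHS](mulmx1 B) !mxE.
  by apply: eq_bigr => k _; rewrite /L !mxE lift_eqF.
rewrite -[LHS]mulr1 -detL -det_mulmx (expand_det_col _ ord_max) big_ord_recr /=.
rewrite big1 => [|i _]; last by rewrite BL_max widen_ord_max col_rcons_lift mxE mul0r.
rewrite add0r BL_max col_rcons_max cofactor_diag mulrC; congr (\det _ * _).
by apply/matrixP => i j; rewrite [LHS]mxE [col' _ _ _ _]mxE BL_lift !mxE.
Qed.

End Schur.

Lemma posdef_det_gt0 p (B : 'M[R]_p) : B^T = B -> posdefmx B -> 0 < \det B.
Proof.
elim: p B => [|p IH] B symB posB; first by rewrite det_mx00 ltr01.
have detA : 0 < \det (leadmx B).
  by apply: IH; [exact: leadmx_sym | exact: posdef_leadmx].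
have unitA : leadmx B \in unitmx by rewrite unitmxE unitfE lt0r_neq0.
rewrite det_schur // -qform_schur_vec //; apply/mulr_gt0/posB => //.
by rewrite col_rcons_eq0 oner_eq0 andbF.
Qed.

Lemma posdef_border p (B : 'M[R]_p.+1) :
  B^T = B -> posdefmx (leadmx B) -> 0 < \det B -> posdefmx B.
Proof.
move=> symB posA detB.
have detA : 0 < \det (leadmx B) by apply: posdef_det_gt0 => //; exact: leadmx_sym.
have unitA : leadmx B \in unitmx by rewrite unitmxE unitfE lt0r_neq0.
have schur_gt0 : 0 < schur_compl B by move: detB; rewrite det_schur // pmulr_rgt0.
move=> x; have [y [t ->]] := col_rconsP x; rewrite col_rcons_eq0 qform_col_rcons_schur //.
have [-> /=|t0 _] := eqVneq t 0.
  by rewrite andbT scale0r addr0 expr0n mulr0 addr0; exact: posA.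
by apply: ltr_wpDl; [exact: posdef_qform_ge0 | rewrite mulr_gt0 ?exprn_even_gt0].
Qed.
End PositiveDefinite.

Lemma det_row_delta_add (R : comPzRingType) p (A : 'M[R]_p) i j c :
  i != j -> row i A = c *: 'e_i + row j A -> \det A = c * cofactor A i i.
Proof.
move=> neq_ij rowiA.
pose B := \matrix_(k, l) if k == i then c * (i == l)%:R else A k l.
pose C := \matrix_(k, l) if k == i then A j l else A k l.
have rowB : row' i B = row' i A by apply/matrixP => k l; rewrite !mxE lift_eqF.
have rowC : row' i C = row' i A by apply/matrixP => k l; rewrite !mxE lift_eqF.
have rowiBC : row i A = 1 *: row i B + 1 *: row i C.
  apply/rowP => l; have := congr1 (fun v : 'rV[R]_p => v 0 l) rowiA.
  by rewrite !mxE !eqxx /= => ->; rewrite eq_sym !mul1r.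
rewrite (determinant_multilinear rowiBC rowB rowC) !mul1r.
rewrite [\det C](determinant_alternate neq_ij) => [|l]; last first.
  by rewrite !mxE eqxx eq_sym (negbTE neq_ij).
have cofB : cofactor B i i = cofactor A i i.
  by rewrite !cofactor_diag; congr (\det _); apply/matrixP => k l; rewrite !mxE lift_eqF.
rewrite addr0 (expand_det_row _ i) (bigD1 i) //= big1 => [|l neq_li].
  by rewrite addr0 cofB mxE !eqxx mulr1.
by rewrite !mxE eqxx eq_sym (negbTE neq_li) mulr0 mul0r.
Qed.

Lemma det_tilde p (C : 'M[int]_p.+1) :
  \det C = \det (tilde C) + (C ord_max ord_max - 3) * \det (leadmx C).
Proof.
have cof j : cofactor (tilde C) ord_max j = cofactor C ord_max j.
  rewrite /cofactor; congr (_ * \det _); apply/matrixP => a b.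
  by rewrite !mxE lift_max /= (ltn_eqF (ltn_ord a)).
rewrite !(expand_det_row _ ord_max) !big_ord_recr /= cof cofactor_diag.
have -> : \sum_(j < p) tilde C ord_max (widen_ord (leqnSn p) j) *
            cofactor (tilde C) ord_max (widen_ord (leqnSn p) j) =
          \sum_(j < p) C ord_max (widen_ord (leqnSn p) j) *
            cofactor C ord_max (widen_ord (leqnSn p) j).
  by apply: eq_bigr => j _; rewrite cof mxE /= (ltn_eqF (ltn_ord j)) andbF.
by rewrite [tilde C _ _]mxE /= eqxx; ring.
Qed.

(* [posdef_int C] is [posdefmx (realmx C)] by definition. *)
Local Notation realmx C := (map_mx (fun z : int => (z%:~R : Rdefinitions.R)) C).

Lemma leadmx_map (T U : Type) (f : T -> U) p (B : 'M[T]_p.+1) :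
  leadmx (map_mx f B) = map_mx f (leadmx B).
Proof. by rewrite /leadmx -map_col' -map_row'. Qed.

Section Extension.
Variables (n p : nat) (M : 'M[int]_p.+1).
Hypotheses (symM : M^T = M) (diagM : forall i, M i i = n%:Z) (n_gt3 : (3 < n)%N).

Definition ext_coef (x y : nat) : int :=
  if x == y then n%:Z
  else if (p <= x)%N && (p <= y)%N then 3
  else M (inord (minn x p)) (inord (minn y p)).

Definition extmx k : 'M[int]_k := \matrix_(i, j) ext_coef i j.

Lemma ext_coef_diag x : ext_coef x x = n%:Z.
Proof. by rewrite /ext_coef eqxx. Qed.

Lemma ext_coef_sym x y : ext_coef x y = ext_coef y x.
Proof.
rewrite /ext_coef eq_sym andbC.
by case: eqP => // _; case: ifP => // _; rewrite -[in LHS]symM mxE.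
Qed.

Lemma ext_coef_mod x y : (forall i j, (M i j = n%:Z %[mod 4])%Z) -> (n %% 4 = 3)%N ->
  (ext_coef x y = n%:Z %[mod 4])%Z.
Proof.
move=> modM n_mod4; rewrite /ext_coef; case: eqP => _ //; case: ifP => _ //.
by rewrite (modz_nat n 4) n_mod4.
Qed.

Lemma ext_coef_leading x y : (x <= p)%N -> (y <= p)%N -> ext_coef x y = M (inord x) (inord y).
Proof.
move=> xp yp; rewrite /ext_coef; case: eqP => [<-|neq_xy]; first by rewrite diagM.
have -> : ((p <= x) && (p <= y))%N = false by apply/negbTE/negP => /andP[]; lia.
by rewrite (minn_idPl xp) (minn_idPl yp).
Qed.

Lemma ext_coef_succ x y : (p <= x)%N -> (y < x)%N -> ext_coef x.+1 y = ext_coef x y.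
Proof.
move=> px yx; rewrite /ext_coef (gtn_eqF yx) (gtn_eqF (leqW yx)) px (leqW px).
by rewrite (minn_idPr px) (minn_idPr (leqW px)).
Qed.

Lemma ext_coef_bump k x y : (p <= k)%N -> (x <= k)%N -> (y <= k)%N ->
  ext_coef (bump k x) (bump k y) = ext_coef x y.
Proof.
move=> pk xk yk; rewrite /ext_coef (inj_eq (can_inj (bumpK k))).
have bumpE z : (z <= k)%N -> ((p <= bump k z) = (p <= z))%N /\ minn (bump k z) p = minn z p.
  by rewrite /bump; case: (leqP k z) => //= kz zk; split; lia.
by have [-> ->] := bumpE _ xk; have [-> ->] := bumpE _ yk.
Qed.

Lemma leadmx_extmx k : leadmx (extmx k.+1) = extmx k.
Proof. by apply/matrixP => i j; rewrite !mxE !lift_max. Qed.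

Lemma det_tilde_extmx k : (p <= k)%N ->
  \det (tilde (extmx k.+2)) = (n%:Z - 3) * \det (tilde (extmx k.+1)).
Proof.
move=> pk; pose a : 'I_k.+2 := inord k.
have val_a : a = k :> nat by rewrite inordK.
have neq_a_max : a != ord_max by rewrite -val_eqE /= val_a; lia.
rewrite (@det_row_delta_add _ _ _ a ord_max (n%:Z - 3)) //.
  rewrite cofactor_diag; congr (_ * \det _); apply/matrixP => i j.
  rewrite !mxE /= val_a.
  have bumpS x : (bump k x == k.+1) = (x == k).
    rewrite /bump; case: leqP => [_|xk]; first by rewrite add1n eqSS.
    by rewrite add0n !ltn_eqF // ltnW.
  by rewrite !bumpS ext_coef_bump // -ltnS.
apply/rowP => j; rewrite !mxE /= val_a eqxx (_ : (k == k.+1) = false); last lia.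
rewrite -val_eqE /= val_a.
have ext_coef_k : ext_coef k k.+1 = 3 /\ ext_coef k.+1 k = 3.
  by rewrite /ext_coef pk (leqW pk) (ltn_eqF (ltnSn k)) (gtn_eqF (ltnSn k)).
have [jk|kj|->] := ltngtP j k.
- by rewrite (ltn_eqF (leqW jk)) ext_coef_succ // mulr0 add0r.
- have -> : j = k.+1 :> nat by apply/eqP; rewrite eqn_leq kj -ltnS ltn_ord.
  by rewrite eqxx mulr0 add0r; case: ext_coef_k.
- by rewrite (ltn_eqF (ltnSn k)) ext_coef_diag mulr1; case: ext_coef_k => _ ->; ring.
Qed.

Lemma extmx_sym k : (extmx k)^T = extmx k.
Proof. by apply/matrixP => i j; rewrite !mxE ext_coef_sym. Qed.

Lemma extmx_id : extmx p.+1 = M.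
Proof.
by apply/matrixP => i j; rewrite mxE (ext_coef_leading (leq_ord i) (leq_ord j)) !inord_val.
Qed.

Lemma extmx_widen k (le_pk : (p < k)%N) i j :
  extmx k (widen_ord le_pk i) (widen_ord le_pk j) = M i j.
Proof. by rewrite mxE (ext_coef_leading (leq_ord i) (leq_ord j)) !inord_val. Qed.

Lemma extmx_step k : (p <= k)%N ->
  posdef_int (extmx k.+1) -> 0 < \det (tilde (extmx k.+1)) ->
  posdef_int (extmx k.+2) /\ 0 < \det (tilde (extmx k.+2)).
Proof.
move=> pk posE detE.
have n3_gt0 : 0 < n%:Z - 3 by rewrite subr_gt0 (ltz_nat 3 n).
have realmx_sym j : (realmx (extmx j))^T = realmx (extmx j) by rewrite map_trmx extmx_sym.
have detE_gt0 : 0 < \det (extmx k.+1).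
  by rewrite -(ltr0z Rdefinitions.R) -det_map_mx posdef_det_gt0.
have detT_gt0 : 0 < \det (tilde (extmx k.+2)) by rewrite det_tilde_extmx // mulr_gt0.
split=> //; apply: posdef_border => //; first by rewrite leadmx_map leadmx_extmx.
rewrite det_map_mx ltr0z det_tilde leadmx_extmx mxE ext_coef_diag.
by rewrite addr_gt0 // mulr_gt0.
Qed.

Lemma extmx_posdef_tilde k : posdef_int M -> 0 < \det (tilde M) ->
  (p < k)%N -> posdef_int (extmx k) /\ 0 < \det (tilde (extmx k)).
Proof.
move=> posM detM; elim: k => [//|k IH]; rewrite ltnS leq_eqVlt => /predU1P[<-|pk].
  by rewrite extmx_id.
case: k IH pk => [//|k] IH pk; have [posE detE] := IH pk.
exact: extmx_step.
Qed.
End Extension.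

Theorem theorem6 (n r m : nat) (Hn4 : (n %% 4 = 3)%N) (Hn3 : (3 < n)%N)
    (Hr : (1 <= r)%N) (Hrm : (r <= m)%N) (M : 'M[int]_r)
    (HM : in_frakC n M) (Hdet : 0 < \det (tilde M)) :
  exists E : 'M[int]_m, in_frakE n Hrm M E /\ 0 < \det (tilde E).
Proof.
case: r Hr Hrm M HM Hdet => [//|p] _ Hrm M [symM posM diagM modM] detM.
have [posE detE] := extmx_posdef_tilde symM diagM Hn3 posM detM Hrm.
exists (extmx n M m); split=> //; split.
  split=> [||i|i j]; rewrite ?mxE ?ext_coef_diag ?ext_coef_mod //; exact: extmx_sym.
exact: extmx_widen.
Qed.
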